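(* Let $G=(V,E)$ be a control flow graph and $p$ a predicate node. The graph $A_p$ has at most one nontrivial strongly connected component, and if such a component exists, it is terminal.
   Context: A control flow graph (CFG) is a finite directed graph $G=(V,E)$ in which every node has at most two outgoing edges; nodes with exactly two outgoing edges are predicate nodes. A path from $n_1$ is a nonempty finite or infinite sequence of nodes with each adjacent pair an edge; it is maximal if it is infinite or its last node has no successor. $V_p$ is the set of nodes occurring on all maximal paths from $p$ in $G$. For $V'\subseteq V$, a $V'$-interval from $x$ to $y$ is a finite path $n_1\ldots n_k$ in $G$ with $k\ge 2$, $n_1=x\in V'$, $n_k=y\in V'$, and $n_i\notin V'$ for $1<i<k$. $A_p$ is the directed graph with node set $V_p$ and an edge $(x,y)$ iff there is a $V_p$-interval from $x$ to $y$ in $G$. A strongly connected component (SCC) is trivial if the subgraph it induces has no edge, and nontrivial otherwise; it is terminal if no edge leads from it to a node outside it. *)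

From mathcomp Require Import all_boot.
From Stdlib Require Import Relations.
Set Implicit Arguments. Unset Strict Implicit. Unset Printing Implicit Defensive.

Definition is_cfg (V : finType) (E : rel V) : Prop :=
  forall x : V, #|[set y | E x y]| <= 2.

Definition is_predicate_node (V : finType) (E : rel V) (p : V) : Prop :=
  #|[set y | E p y]| = 2.

(* v occurs on every maximal path from p: every infinite path from p
   (f 0 = p) and every finite path p :: s whose last node has no successor. *)
Definition Vp (V : finType) (E : rel V) (p : V) (v : V) : Prop :=
  (forall f : nat -> V, f 0 = p -> (forall i, E (f i) (f i.+1)) ->
      exists i, f i = v) /\
  (forall s : seq V, path E p s -> (forall z, ~~ E (last p s) z) ->
      v \in p :: s).

Definition interval (V : finType) (E : rel V) (Vs : V -> Prop) (x y : V) : Prop :=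
  Vs x /\ Vs y /\
  exists s : seq V, path E x (rcons s y) /\ (forall z, z \in s -> ~ Vs z).

Definition Ap (V : finType) (E : rel V) (p : V) : relation V :=
  interval E (Vp E p).

Definition is_scc (V : finType) (E : rel V) (p : V) (C : V -> Prop) : Prop :=
  exists x, Vp E p x /\
    forall y, C y <-> (Vp E p y /\ clos_refl_trans V (Ap E p) x y
                                /\ clos_refl_trans V (Ap E p) y x).

Definition scc_nontrivial (V : finType) (E : rel V) (p : V) (C : V -> Prop) : Prop :=
  exists x y, C x /\ C y /\ Ap E p x y.

Definition scc_terminal (V : finType) (E : rel V) (p : V) (C : V -> Prop) : Prop :=
  forall x y, C x -> Ap E p x y -> C y.

From mathcomp Require Import all_boot.
From Stdlib Require Import Relations Classical_Prop.
Set Implicit Arguments. Unset Strict Implicit. Unset Printing Implicit Defensive.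

(* Every node of V_p is reachable from p, and reachability between nodes of
   V_p is the same in G and in A_p.  A nontrivial SCC of A_p contains a node a
   lying on a cycle of G.  Every node that reaches a has a successor that
   reaches a (for a itself, its successor on the cycle), and p reaches a, so
   some infinite path from p consists of nodes reaching a; every node of V_p
   lies on it, hence reaches a.  Thus all of V_p reaches every nontrivial SCC,
   which forces uniqueness and terminality. *)

Section Reachability.

Variables (V : finType) (E : rel V).

Definition on_cycle (a : V) : Prop := exists2 z, E a z & connect E z a.

Lemma infinite_path_in (P : pred V) x :
  P x -> (forall w, P w -> exists2 z, E w z & P z) ->
  exists f : nat -> V, [/\ f 0 = x, forall i, E (f i) (f i.+1) & forall i, P (f i)].
Proof.
move=> Px succP.
pose next w := odflt w [pick z | E w z && P z].
have nextP w : P w -> E w (next w) && P (next w).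
  move=> /succP[z Ewz Pz]; rewrite /next.
  by case: pickP => [//|/(_ z)]; rewrite Ewz Pz.
have iterP i : P (iter i next x) by elim: i => //= i /nextP /andP[].
exists (fun i => iter i next x); split=> // i.
by have /andP[] := nextP _ (iterP i).
Qed.

Lemma Vp_connect p v : Vp E p v -> connect E p v.
Proof.
case=> onInf onFin.
(* Either a sink is reachable, giving a finite maximal path, or there is none
   and the reachable nodes carry an infinite path. *)
have [/existsP[w /andP[pw /forallP sink_w]] | ] :=
  boolP [exists w, connect E p w && [forall z, ~~ E w z]].
  move: pw sink_w => /connectP[s ps ->] sink_w.
  by have /(path_connect ps) := onFin s ps sink_w.
rewrite negb_exists => /forallP no_sink.
have succ w : connect E p w -> exists2 z, E w z & connect E p z.
  move=> pw; have /forallPn[z] : ~~ [forall z, ~~ E w z] by move: (no_sink w); rewrite pw.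
  rewrite negbK => Ewz; exists z => //; exact: connect_trans pw (connect1 Ewz).
have [f [f0 fE fP]] := infinite_path_in (connect0 E p) succ.
by have [i <-] := onInf f f0 fE; apply: fP.
Qed.

Lemma connect_on_cycle_step a w :
  on_cycle a -> connect E w a -> exists2 z, E w z & connect E z a.
Proof.
move=> cyc_a /connectP[[|z s] /= pws wa]; first by rewrite -wa.
by case/andP: pws => Ewz pzs; exists z => //; apply/connectP; exists s.
Qed.

Lemma Vp_connect_on_cycle p a v :
  connect E p a -> on_cycle a -> Vp E p v -> connect E v a.
Proof.
move=> pa cyc_a [onInf _].
have [f [f0 fE fP]] :=
  infinite_path_in (P := connect E ^~ a) pa (fun w => connect_on_cycle_step cyc_a).
by have [i <-] := onInf f f0 fE; apply: fP.
Qed.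

Lemma interval_connect (Vs : V -> Prop) x y : interval E Vs x y -> connect E x y.
Proof.
by case=> _ [_ [s [ps _]]]; apply/connectP; exists (rcons s y); rewrite ?last_rcons.
Qed.

Lemma rt_interval_connect (Vs : V -> Prop) x y :
  clos_refl_trans V (interval E Vs) x y -> connect E x y.
Proof.
elim=> [u w /interval_connect // | u | u w t _ uw _ wt]; first exact: connect0.
exact: connect_trans uw wt.
Qed.

(* [acc] is the part of the path already walked since the last node of [Vs]. *)
Lemma rt_interval_path (Vs : V -> Prop) x acc s :
  Vs x -> (forall z, z \in acc -> ~ Vs z) -> path E x (acc ++ s) ->
  Vs (last x (acc ++ s)) -> clos_refl_trans V (interval E Vs) x (last x (acc ++ s)).
Proof.
elim: s x acc => [|z s IH] x acc Vx acc_out.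
  rewrite cats0 => _; have := mem_last x acc; rewrite in_cons.
  by case/orP=> [/eqP -> _ | /acc_out nV /nV []]; exact: rt_refl.
have [Vz | nVz] := classic (Vs z).
  rewrite cat_path last_cat /= => /andP[pacc /andP[Ez pzs]] Vlast.
  apply: (@rt_trans _ _ _ z).
    by apply: rt_step; split=> //; split=> //; exists acc; rewrite rcons_path pacc.
  by apply: (IH z [::]) => // w; rewrite in_nil.
rewrite -cat_rcons => pxs Vlast; apply: IH => // w.
by rewrite mem_rcons in_cons => /orP[/eqP -> // | /acc_out].
Qed.

Lemma connect_rt_interval (Vs : V -> Prop) x y :
  Vs x -> Vs y -> connect E x y -> clos_refl_trans V (interval E Vs) x y.
Proof.
move=> Vx Vy /connectP[s ps ys]; rewrite {}ys in Vy *.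
by apply: (rt_interval_path (acc := [::])) => // z; rewrite in_nil.
Qed.

End Reachability.

Section StronglyConnectedComponents.

Variables (V : finType) (E : rel V) (p : V).

Lemma rt_Ap_connect x y :
  Vp E p x -> Vp E p y -> clos_refl_trans V (Ap E p) x y <-> connect E x y.
Proof.
by move=> Vx Vy; split; [exact: rt_interval_connect | exact: connect_rt_interval].
Qed.

Lemma scc_memE (C : V -> Prop) x : is_scc E p C -> C x ->
  forall y, C y <-> [/\ Vp E p y, connect E x y & connect E y x].
Proof.
case=> r [Vr memC] /memC[Vx [/(rt_Ap_connect Vr Vx) rx /(rt_Ap_connect Vx Vr) xr]] y.
rewrite memC; split=> [[Vy [/(rt_Ap_connect Vr Vy) ry /(rt_Ap_connect Vy Vr) yr]] | [Vy xy yx]].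
  by split=> //; [exact: connect_trans xr ry | exact: connect_trans yr rx].
split=> //; split; apply/rt_Ap_connect => //.
  exact: connect_trans rx xy.
exact: connect_trans yx xr.
Qed.

Lemma scc_Vp (C : V -> Prop) x : is_scc E p C -> C x -> Vp E p x.
Proof. by move=> sccC Cx; have [] := (scc_memE sccC Cx x).1 Cx. Qed.

Lemma scc_nontrivial_on_cycle (C : V -> Prop) :
  is_scc E p C -> scc_nontrivial E p C -> exists2 a, C a & on_cycle E a.
Proof.
move=> sccC [x [y [Cx [Cy [_ [_ [s [pxs _]]]]]]]].
have [_ _ yx] := (scc_memE sccC Cx y).1 Cy.
exists x => //; case: s pxs => [|z s] /= /andP[Exz pzs]; [by exists y | exists z => //].
by apply: connect_trans yx; apply/connectP; exists (rcons s y); rewrite ?last_rcons.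
Qed.

Lemma scc_on_cycle_attracts (C : V -> Prop) a v :
  is_scc E p C -> C a -> on_cycle E a -> Vp E p v -> connect E v a.
Proof.
by move=> sccC Ca; apply: Vp_connect_on_cycle; apply: Vp_connect; exact: scc_Vp Ca.
Qed.

End StronglyConnectedComponents.

Theorem lemma4p6 (V : finType) (E : rel V) (p : V) :
  is_cfg E -> is_predicate_node E p ->
  (forall C1 C2 : V -> Prop,
      is_scc E p C1 -> is_scc E p C2 ->
      scc_nontrivial E p C1 -> scc_nontrivial E p C2 ->
      forall v, C1 v <-> C2 v) /\
  (forall C : V -> Prop,
      is_scc E p C -> scc_nontrivial E p C -> scc_terminal E p C).
Proof.
move=> _ _; split.
  move=> C1 C2 scc1 scc2 /(scc_nontrivial_on_cycle scc1)[a1 C1a1 cyc1]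
    /(scc_nontrivial_on_cycle scc2)[a2 C2a2 cyc2] v.
  have a21 := scc_on_cycle_attracts scc1 C1a1 cyc1 (scc_Vp scc2 C2a2).
  have a12 := scc_on_cycle_attracts scc2 C2a2 cyc2 (scc_Vp scc1 C1a1).
  rewrite (scc_memE scc1 C1a1) (scc_memE scc2 C2a2).
  split=> -[Vv av va].
    by split=> //; [exact: connect_trans a21 av | exact: connect_trans va a12].
  by split=> //; [exact: connect_trans a12 av | exact: connect_trans va a21].
move=> C sccC /(scc_nontrivial_on_cycle sccC)[a Ca cyc] x y Cx Axy.
have Vy : Vp E p y by case: Axy => _ [].
have [_ ax _] := (scc_memE sccC Ca x).1 Cx.
apply/(scc_memE sccC Cx); split=> //; first exact: interval_connect Axy.
exact: connect_trans (scc_on_cycle_attracts sccC Ca cyc Vy) ax.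
Qed.
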